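(* Let $\mathbb F_q$ be a finite field of characteristic $p$, and let $(G_i,S_i)_i$ be a sequence where each $G_i$ is a finite abelian group with $p\nmid|G_i|$, and $S_i\subset\widehat{G_i}$ is a subset of the $\overline{\mathbb F}_q^\times$-valued character group which is Galois-stable: if $\chi\in S_i$ then $\chi^\sigma\in S_i$ for all $\sigma\in\mathrm{Gal}(\overline{\mathbb F}_q/\mathbb F_q)$. Let $\widehat{H_{S_i}}\subset\widehat{G_i}$ be the subgroup generated by $S_i$. Suppose $|G_i|\to\infty$ and there is $0<\delta<1$ with $|\widehat{H_{S_i}}|\gg|G_i|^\delta$. Then for every $\epsilon>0$, $|S_i|\gg_\epsilon(\ln|G_i|)^{1-\epsilon}$. *)

From Stdlib Require Import Reals.
From HB Require Import structures.
From mathcomp Require Import all_boot all_order all_algebra all_fingroup.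
Set Implicit Arguments. Unset Strict Implicit. Unset Printing Implicit Defensive.
Import GRing.Theory.
Local Open Scope ring_scope.

Section Characters.
Variables (K : fieldType) (gT : finGroupType).

Definition is_character (chi : {ffun gT -> K}) : Prop :=
  (forall x, chi x != 0) /\ (forall x y : gT, chi (x * y)%g = chi x * chi y).

Definition char_one : {ffun gT -> K} := [ffun _ => 1].
Definition char_mul (a b : {ffun gT -> K}) : {ffun gT -> K} := [ffun x => a x * b x].
Definition char_inv (a : {ffun gT -> K}) : {ffun gT -> K} := [ffun x => (a x)^-1].

Definition in_gen_subgroup (S : seq {ffun gT -> K}) (chi : {ffun gT -> K}) : Prop :=
  forall H : {ffun gT -> K} -> Prop,
    H char_one ->
    (forall a b, H a -> H b -> H (char_mul a b)) ->
    (forall a, H a -> H (char_inv a)) ->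
    (forall s, s \in S -> H s) ->
    H chi.

(* S is stable under every field automorphism of K fixing F_q = {x | x^q = x}. *)
Definition galois_stable (q : nat) (S : seq {ffun gT -> K}) : Prop :=
  forall sigma : {rmorphism K -> K},
    bijective sigma ->
    (forall x : K, x ^+ q = x -> sigma x = x) ->
    forall chi, chi \in S -> [ffun x => sigma (chi x)] \in S.

End Characters.

(* Galois stability makes S closed under chi |-> chi ^ q, where q = p ^ k.  As the
   elements of S have finite order, every element of the subgroup generated by S is a
   monomial prod_s s ^ (e s), and exponents >= q can be carried into the exponent of
   s ^ q, which lies in S again; so all exponents may be taken < q and the subgroup has
   at most q ^ |S| elements.  Hence |S| >= log_q |H_S| >> delta ln |G|, which is
   stronger than the claim. *)
From Stdlib Require Import Reals Lra Lia.
From HB Require Import structures.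
From mathcomp Require Import all_boot all_order all_algebra all_fingroup cyclic zify.
Set Implicit Arguments. Unset Strict Implicit. Unset Printing Implicit Defensive.
Import GRing.Theory.
Local Open Scope ring_scope.

Section FrobeniusPower.
Variables (R : comNzSemiRingType) (p k : nat).
Hypothesis pcharRp : p \in [pchar R].

Definition pFrobeniusX_aut of p \in [pchar R] := fun x : R => x ^+ (p ^ k).

Lemma pFrobeniusX_aut_is_nmod_morphism : nmod_morphism (pFrobeniusX_aut pcharRp).
Proof.
have p_gt0 := prime_gt0 (pcharf_prime pcharRp).
split=> [|x y]; rewrite /pFrobeniusX_aut; first by rewrite expr0n gtn_eqF ?expn_gt0 ?p_gt0.
by apply: exprDn_pchar; rewrite pnatX pnatE ?pcharRp ?(pcharf_prime pcharRp).
Qed.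

Lemma pFrobeniusX_aut_is_monoid_morphism : monoid_morphism (pFrobeniusX_aut pcharRp).
Proof. by split=> [|x y]; rewrite /pFrobeniusX_aut ?expr1n // exprMn. Qed.

HB.instance Definition _ := GRing.isNmodMorphism.Build R R (pFrobeniusX_aut pcharRp)
  pFrobeniusX_aut_is_nmod_morphism.
HB.instance Definition _ := GRing.isMonoidMorphism.Build R R (pFrobeniusX_aut pcharRp)
  pFrobeniusX_aut_is_monoid_morphism.

End FrobeniusPower.

Lemma pFrobeniusX_aut_bij (F : closedFieldType) p k (pcharFp : p \in [pchar F]) :
  bijective (pFrobeniusX_aut k pcharFp).
Proof.
have q_gt0 : (0 < p ^ k)%N by rewrite expn_gt0 prime_gt0 ?(pcharf_prime pcharFp).
have root_ex y : exists x : F, x ^+ (p ^ k) == y.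
  have : size ('X^(p ^ k) - y%:P : {poly F}) != 1%N by rewrite size_XnsubC // eqSS -lt0n.
  by case/closed_rootP => x; rewrite rootE !hornerE subr_eq0; exists x.
exists (fun y => xchoose (root_ex y)) => [x|y]; last exact: eqP (xchooseP (root_ex y)).
apply: (fmorph_inj (pFrobeniusX_aut k pcharFp : {rmorphism F -> F})).
exact: eqP (xchooseP (root_ex _)).
Qed.

Lemma galois_stable_expr (F : closedFieldType) (gT : finGroupType) p k
    (S : seq {ffun gT -> F}) :
  p \in [pchar F] -> galois_stable (p ^ k) S ->
  {in S, forall s : {ffun gT -> F}, [ffun x => s x ^+ (p ^ k)] \in S}.
Proof.
move=> pcharFp S_gal s; apply: (S_gal (pFrobeniusX_aut k pcharFp)) => //.
exact: pFrobeniusX_aut_bij.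
Qed.

Section CharacterOrder.
Variables (K : fieldType) (gT : finGroupType) (chi : {ffun gT -> K}).
Hypothesis chi_char : is_character chi.

Lemma character1 : chi 1%g = 1.
Proof.
have [chi_neq0 chiM] := chi_char.
by apply: (mulfI (chi_neq0 1%g)); rewrite mulr1 -chiM mulg1.
Qed.

Lemma characterX x m : chi (x ^+ m)%g = chi x ^+ m.
Proof.
elim: m => [|m IHm]; first by rewrite expg0 expr0 character1.
by rewrite expgS exprS chi_char.2 IHm.
Qed.

Lemma character_expr_card x : chi x ^+ #|gT| = 1.
Proof. by rewrite -characterX -cardsT expg_cardG ?inE // character1. Qed.

End CharacterOrder.

Lemma prod_expr_delta (R : comNzSemiRingType) n (F : 'I_n -> R) (j : 'I_n) m :
  \prod_(i < n) F i ^+ (m * (i == j)) = F j ^+ m.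
Proof.
rewrite (bigD1 j) //= eqxx muln1 big1 ?mulr1 // => i /negbTE ->.
by rewrite muln0 expr0.
Qed.

Lemma sum_delta n (j : 'I_n) m : (\sum_(i < n) m * (i == j) = m)%N.
Proof.
by rewrite (bigD1 j) //= eqxx muln1 big1 ?addn0 // => i /negbTE ->; rewrite muln0.
Qed.

Section GeneratedSubgroupCard.
Variables (K : fieldType) (gT : finGroupType) (S : seq {ffun gT -> K}).

Local Notation n := (size S).
Local Notation s j := (nth (char_one K gT) S j).

Definition char_monomial (e : 'I_n -> nat) : {ffun gT -> K} :=
  [ffun x => \prod_(j < n) s j x ^+ e j].

Lemma eq_char_monomial e e' : e =1 e' -> char_monomial e = char_monomial e'.
Proof.
by move=> ee'; apply/ffunP => x; rewrite !ffunE; apply: eq_bigr => j _; rewrite ee'.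
Qed.

Lemma char_monomial0 : char_one K gT = char_monomial (fun _ => 0%N).
Proof. by apply/ffunP => x; rewrite !ffunE big1 // => j _; rewrite expr0. Qed.

Lemma char_monomialD e e' :
  char_mul (char_monomial e) (char_monomial e') = char_monomial (fun j => e j + e' j)%N.
Proof.
by apply/ffunP => x; rewrite !ffunE -big_split; apply: eq_bigr => j _; rewrite exprD.
Qed.

Lemma char_monomial_delta (j : 'I_n) : s j = char_monomial (fun i => 1 * (i == j))%N.
Proof. by apply/ffunP => x; rewrite ffunE prod_expr_delta expr1. Qed.

Hypothesis S_char : {in S, forall s : {ffun gT -> K}, is_character s}.

Lemma char_monomialV e :
  char_inv (char_monomial e) = char_monomial (fun j => e j * #|gT|.-1)%N.
Proof.
apply/ffunP => x; rewrite !ffunE -prodfV; apply: eq_bigr => j _.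
rewrite exprM; apply: mulr1_eq; rewrite -exprS -exprM mulnC exprM.
rewrite prednK; last by apply/card_gt0P; exists 1%g.
by rewrite (character_expr_card (S_char (mem_nth _ _))) ?expr1n.
Qed.

Lemma gen_subgroup_monomial chi :
  in_gen_subgroup S chi -> exists e, chi = char_monomial e.
Proof.
move=> chi_gen; apply: (chi_gen (fun c => exists e, c = char_monomial e)).
- by exists (fun _ => 0%N); apply: char_monomial0.
- by move=> _ _ [e ->] [e' ->]; eexists; apply: char_monomialD.
- by move=> _ [e ->]; eexists; apply: char_monomialV.
move=> c cS.
have c_idx : (index c S < n)%N by rewrite index_mem.
by exists (fun i => 1 * (i == Ordinal c_idx))%N; rewrite -char_monomial_delta nth_index.
Qed.

Variable q : nat.
Hypothesis q_gt1 : (1 < q)%N.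
Hypothesis S_expr : {in S, forall s : {ffun gT -> K}, [ffun x => s x ^+ q] \in S}.

Lemma char_monomial_carry e (j j' : 'I_n) : (q <= e j)%N ->
  (forall x, s j' x = s j x ^+ q) ->
  char_monomial e = char_monomial (fun i => e i - q * (i == j) + 1 * (i == j'))%N.
Proof.
move=> le_q_ej sj'E; apply/ffunP => x; rewrite !ffunE.
under [RHS]eq_bigr do rewrite exprD.
rewrite big_split /= prod_expr_delta expr1 sj'E.
rewrite -(prod_expr_delta (fun i => s i x) j q) -big_split /=.
apply: eq_bigr => i _; rewrite -exprD; congr (_ ^+ _).
by case: eqP => [->|]; rewrite ?muln1 ?muln0 ?subn0 ?addn0 ?subnK.
Qed.

Lemma char_monomial_reduce e :
  exists d : {ffun 'I_n -> 'I_q}, char_monomial e = char_monomial (fun j => d j).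
Proof.
have [m] := ubnP (\sum_j e j); elim: m e => // m IHm e lt_e_m.
have [j le_q_ej | small_e] := pickP (fun j => q <= e j)%N; last first.
  have lt_e_q j : (e j < q)%N by rewrite ltnNge small_e.
  by exists [ffun j => Ordinal (lt_e_q j)]; apply: eq_char_monomial => j; rewrite ffunE.
have j'_idx : (index [ffun x => s j x ^+ q] S < n)%N by rewrite index_mem S_expr ?mem_nth.
pose j' := Ordinal j'_idx.
have sj'E x : s j' x = s j x ^+ q by rewrite nth_index ?ffunE // S_expr ?mem_nth.
have sum_e : (\sum_i e i = \sum_i (e i - q * (i == j)) + q)%N.
  rewrite -[X in _ = _ + X](sum_delta j q) -big_split /=; apply: eq_bigr => i _.
  by case: eqP => [->|_]; lia.
rewrite (char_monomial_carry le_q_ej sj'E).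
have /IHm [d ->] : (\sum_i (e i - q * (i == j) + 1 * (i == j')) < m)%N.
  by move: lt_e_m; rewrite sum_e big_split /= sum_delta; lia.
by exists d.
Qed.

Lemma size_gen_subgroup_le (l : seq {ffun gT -> K}) : uniq l ->
  (forall chi, chi \in l -> in_gen_subgroup S chi) -> (size l <= q ^ n)%N.
Proof.
move=> l_uniq l_gen.
pose reduced := [seq char_monomial (fun j => d j)
                 | d : {ffun 'I_n -> 'I_q} <- enum {ffun 'I_n -> 'I_q}].
have <- : size reduced = (q ^ n)%N by rewrite size_map -cardE card_ffun !card_ord.
apply: uniq_leq_size => // chi /l_gen/gen_subgroup_monomial [e ->].
by have [d ->] := char_monomial_reduce e; apply: map_f; rewrite mem_enum.
Qed.

End GeneratedSubgroupCard.

Local Close Scope ring_scope.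

Section RealBounds.
Local Open Scope R_scope.

Lemma INR_expn a b : INR (a ^ b)%N = INR a ^ b.
Proof. by elim: b => [|b IHb]; rewrite ?expn0 // expnS -multE mult_INR IHb. Qed.

Lemma ln_le x y : 0 < x -> x <= y -> ln x <= ln y.
Proof. by move=> x_gt0 [lt_xy|->]; [apply/Rlt_le/ln_increasing | apply: Rle_refl]. Qed.

Lemma ln_INR_unbounded (f : nat -> nat) :
  (forall M, exists N, forall i, (N <= i)%N -> (M <= f i)%N) ->
  forall A, exists N, forall i, (N <= i)%N -> 0 < INR (f i) /\ A <= ln (INR (f i)).
Proof.
move=> f_unbounded A; have [M gt_M_expA] := INR_unbounded (exp A).
have [N le_M_f] := f_unbounded M; exists N => i le_N_i.
have le_M_fi : INR M <= INR (f i) by apply/le_INR/leP/le_M_f.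
have f_gt0 : 0 < INR (f i) by move: (exp_pos A); lra.
split=> //; rewrite -[A]ln_exp; apply: ln_le; [exact: exp_pos | lra].
Qed.

(* Taking logarithms in C G^delta <= b^s; the constant ln C is absorbed by half of
   delta ln G once G is large. *)
Lemma ln_le_of_power_le C delta G b (s : nat) :
  0 < C -> 0 < delta -> 0 < G -> 1 < b ->
  2 * Rabs (ln C) / delta <= ln G -> C * Rpower G delta <= b ^ s ->
  delta / (2 * ln b) * ln G <= INR s.
Proof.
move=> C_gt0 delta_gt0 G_gt0 b_gt1 lnG_large le_Gdelta_bs.
have lnC_small : 2 * Rabs (ln C) <= delta * ln G.
  have -> : 2 * Rabs (ln C) = delta * (2 * Rabs (ln C) / delta) by field; lra.
  by apply: Rmult_le_compat_l; lra.
have lnb_gt0 : 0 < ln b by rewrite -ln_1; apply: ln_increasing; lra.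
have := ln_le (Rmult_lt_0_compat _ _ C_gt0 (exp_pos _)) le_Gdelta_bs.
rewrite ln_mult ?ln_exp ?ln_pow; try lra; last exact: exp_pos.
have := Rle_abs (- ln C); rewrite Rabs_Ropp => le_lnC_abs le_logs.
apply: (Rmult_le_reg_r (2 * ln b)); first lra.
have -> : delta / (2 * ln b) * ln G * (2 * ln b) = delta * ln G by field; lra.
lra.
Qed.

Lemma Rpower_le_self x a : 1 <= x -> a <= 1 -> Rpower x a <= x.
Proof. by move=> x_ge1 a_le1; rewrite -{2}(Rpower_1 x); [apply: Rle_Rpower | lra]. Qed.

End RealBounds.

Theorem mainTheorem6 (p k : nat) (K : closedFieldType)
  (gT : nat -> finGroupType) (S : forall i : nat, seq {ffun gT i -> K}) (delta : R) :
  prime p -> (p \in [pchar K])%R -> 0 < k ->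
  (forall i, abelian [set: gT i]) ->
  (forall i, ~~ (p %| #|gT i|)) ->
  (forall i, uniq (S i)) ->
  (forall i s, s \in S i -> is_character s) ->
  (forall i, galois_stable (p ^ k) (S i)) ->
  (forall M : nat, exists N : nat, forall i, N <= i -> M <= #|gT i|) ->
  Rlt 0 delta -> Rlt delta 1 ->
  (exists C : R, Rlt 0 C /\ exists N : nat, forall i, N <= i ->
     exists l : seq {ffun gT i -> K},
       uniq l /\ (forall chi, chi \in l -> in_gen_subgroup (S i) chi) /\
       Rle (Rmult C (Rpower (INR #|gT i|) delta)) (INR (size l))) ->
  forall eps : R, Rlt 0 eps ->
    exists C : R, Rlt 0 C /\ exists N : nat, forall i, N <= i ->
      Rle (Rmult C (Rpower (ln (INR #|gT i|)) (Rminus 1 eps))) (INR (size (S i))).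
Proof.
Local Open Scope R_scope.
move=> p_prime pcharKp k_gt0 _ _ _ S_char S_gal G_unbounded delta_gt0 _.
move=> [C [C_gt0 [N0 H_large]]] eps eps_gt0.
have q_gt1 : (1 < p ^ k)%N by rewrite -(expn0 p) ltn_exp2l // prime_gt1.
have q_gt1R : 1 < INR (p ^ k) by apply: (lt_INR 1); apply/ltP.
have lnq_gt0 : 0 < ln (INR (p ^ k)) by rewrite -ln_1; apply: ln_increasing; lra.
have [N1 lnG_large] :=
  ln_INR_unbounded G_unbounded (Rmax 1 (2 * Rabs (ln C) / delta)).
exists (delta / (2 * ln (INR (p ^ k)))); split.
  by apply: Rdiv_lt_0_compat; lra.
exists (maxn N0 N1) => i; rewrite geq_max => /andP [le_N0_i le_N1_i].
have [l [l_uniq [l_gen le_Gdelta_l]]] := H_large i le_N0_i.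
have [G_gt0 lnG_ge] := lnG_large i le_N1_i.
have lnG_ge1 := Rle_trans _ _ _ (Rmax_l _ _) lnG_ge.
have lnC_small := Rle_trans _ _ _ (Rmax_r _ _) lnG_ge.
have le_pow : Rpower (ln (INR #|gT i|)) (1 - eps) <= ln (INR #|gT i|).
  by apply: Rpower_le_self; lra.
apply: Rle_trans (Rmult_le_compat_l _ _ _ _ le_pow) _.
  by apply/Rlt_le/Rdiv_lt_0_compat; lra.
apply: (ln_le_of_power_le C_gt0 delta_gt0 G_gt0 q_gt1R lnC_small).
rewrite -INR_expn; apply: Rle_trans le_Gdelta_l _; apply/le_INR/leP.
apply: (size_gen_subgroup_le (S := S i)) => //; first exact: S_char.
exact: galois_stable_expr.
Qed.
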